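(* Let $\lambda_1,\dots,\lambda_n$ be real numbers and set $\lambda_0=\lambda_{n+1}=\infty$. Then $\lambda_i\ge\min(\lambda_{i-1},\lambda_{i+1})$ for every $i\in[n]$ if and only if there exist $x_1,\dots,x_{n-1}\in\mathbb{R}$ such that $\lambda_i=\min(x_i,x_{i-1})$ for every $i\in[n]$, where $x_0=x_n=\infty$. *)

From Stdlib Require Import Reals Arith.
From Coquelicot Require Import Coquelicot.
Open Scope R_scope.

Definition lam_ext (n : nat) (lam : nat -> R) (i : nat) : Rbar :=
  if (Nat.eqb i 0 || Nat.eqb i (S n))%bool then p_infty else Finite (lam i).

Definition x_ext (n : nat) (x : nat -> R) (i : nat) : Rbar :=
  if (Nat.eqb i 0 || Nat.eqb i n)%bool then p_infty else Finite (x i).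

(* Put x_j = max(lambda_j, lambda_(j+1)), which is +oo exactly at j = 0 and j = n.
   Since lambda_i lies below both neighbouring x's, and equals the one on the side of
   a neighbour not exceeding it, min(x_i, x_(i-1)) = lambda_i.  Conversely, if
   lambda_i = min(x_i, x_(i-1)) then lambda_(i-1) <= x_(i-1) and lambda_(i+1) <= x_i,
   so min(lambda_(i-1), lambda_(i+1)) <= min(x_(i-1), x_i) = lambda_i. *)
From Stdlib Require Import Reals Arith Lia.
From Coquelicot Require Import Coquelicot.
Open Scope R_scope.

Lemma Rbar_le_p_infty (x : Rbar) : Rbar_le x p_infty.
Proof. destruct x; exact I. Qed.

Definition Rbar_max (x y : Rbar) : Rbar := if Rbar_le_dec x y then y else x.

Lemma Rbar_max_l (x y : Rbar) : Rbar_le x (Rbar_max x y).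
Proof.
  unfold Rbar_max; destruct (Rbar_le_dec x y); [assumption | apply Rbar_le_refl].
Qed.

Lemma Rbar_max_r (x y : Rbar) : Rbar_le y (Rbar_max x y).
Proof.
  unfold Rbar_max; destruct (Rbar_le_dec x y) as [_ | Hxy].
  - apply Rbar_le_refl.
  - apply Rbar_lt_le, Rbar_not_le_lt, Hxy.
Qed.

Lemma Rbar_max_left (x y : Rbar) : Rbar_le y x -> Rbar_max x y = x.
Proof.
  intros Hyx; unfold Rbar_max; destruct (Rbar_le_dec x y); [|reflexivity].
  apply Rbar_le_antisym; assumption.
Qed.

Lemma Rbar_max_right (x y : Rbar) : Rbar_le x y -> Rbar_max x y = y.
Proof.
  intros Hxy; unfold Rbar_max; destruct (Rbar_le_dec x y); [reflexivity | contradiction].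
Qed.

Lemma Rbar_max_finite (a b : R) : Rbar_max (Finite a) (Finite b) = Finite (Rmax a b).
Proof.
  unfold Rmax; destruct (Rle_dec a b) as [Hab | Hab].
  - apply Rbar_max_right, Hab.
  - apply Rbar_max_left; simpl; apply Rlt_le, Rnot_le_lt, Hab.
Qed.

Lemma Rbar_min_left (x y : Rbar) : Rbar_le x y -> Rbar_min x y = x.
Proof.
  intros Hxy; apply (Rbar_min_case_strong x y (fun m => m = x)); intros H.
  - reflexivity.
  - apply Rbar_le_antisym; assumption.
Qed.

Lemma Rbar_min_le_compat (a b c d : Rbar) :
  Rbar_le a c -> Rbar_le b d -> Rbar_le (Rbar_min a b) (Rbar_min c d).
Proof.
  intros Hac Hbd; apply (Rbar_min_case_strong c d (Rbar_le (Rbar_min a b))); intros _.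
  - apply Rbar_le_trans with a; [apply Rbar_min_l | exact Hac].
  - apply Rbar_le_trans with b; [apply Rbar_min_r | exact Hbd].
Qed.

Lemma Rbar_min_le_cases (a c b : Rbar) :
  Rbar_le (Rbar_min a c) b -> Rbar_le a b \/ Rbar_le c b.
Proof.
  apply (Rbar_min_case a c (fun m => Rbar_le m b -> _)); [left | right]; assumption.
Qed.

Lemma Rbar_min_max_median (a b c : Rbar) :
  Rbar_le (Rbar_min a c) b -> Rbar_min (Rbar_max b c) (Rbar_max a b) = b.
Proof.
  intros Hb; destruct (Rbar_min_le_cases a c b Hb) as [Hab | Hcb].
  - rewrite (Rbar_max_right a b Hab), Rbar_min_comm.
    apply Rbar_min_left, Rbar_max_l.
  - rewrite (Rbar_max_left b c Hcb).
    apply Rbar_min_left, Rbar_max_r.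
Qed.

Section Extensions.

Variable n : nat.

Lemma lam_ext_interior (lam : nat -> R) (i : nat) :
  (1 <= i <= n)%nat -> lam_ext n lam i = Finite (lam i).
Proof.
  intros Hi; unfold lam_ext.
  rewrite (proj2 (Nat.eqb_neq i 0)), (proj2 (Nat.eqb_neq i (S n))) by lia.
  reflexivity.
Qed.

Lemma lam_ext_last (lam : nat -> R) : lam_ext n lam (S n) = p_infty.
Proof. unfold lam_ext; rewrite Nat.eqb_refl, Bool.orb_true_r; reflexivity. Qed.

Lemma x_ext_interior (x : nat -> R) (j : nat) :
  (1 <= j < n)%nat -> x_ext n x j = Finite (x j).
Proof.
  intros Hj; unfold x_ext.
  rewrite (proj2 (Nat.eqb_neq j 0)), (proj2 (Nat.eqb_neq j n)) by lia.
  reflexivity.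
Qed.

Lemma x_ext_last (x : nat -> R) : x_ext n x n = p_infty.
Proof. unfold x_ext; rewrite Nat.eqb_refl, Bool.orb_true_r; reflexivity. Qed.

Lemma x_ext_neighbour_max (lam : nat -> R) (j : nat) : (j <= n)%nat ->
  x_ext n (fun k => Rmax (lam k) (lam (k + 1)%nat)) j
  = Rbar_max (lam_ext n lam j) (lam_ext n lam (j + 1)).
Proof.
  intros Hj.
  destruct (Nat.eq_dec j 0) as [-> | Hj0].
  - rewrite Rbar_max_left by apply Rbar_le_p_infty; reflexivity.
  - destruct (Nat.eq_dec j n) as [-> | Hjn].
    + rewrite x_ext_last, Nat.add_1_r, lam_ext_last.
      symmetry; apply Rbar_max_right, Rbar_le_p_infty.
    + rewrite x_ext_interior, !lam_ext_interior by lia.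
      symmetry; apply Rbar_max_finite.
Qed.

Lemma lam_ext_le_x_ext (lam x : nat -> R) :
  (forall i, (1 <= i <= n)%nat -> Finite (lam i) = Rbar_min (x_ext n x i) (x_ext n x (i - 1))) ->
  forall j, (j <= n)%nat -> Rbar_le (lam_ext n lam j) (x_ext n x j).
Proof.
  intros Hx j Hj; destruct (Nat.eq_dec j 0) as [-> | Hj0].
  - apply Rbar_le_refl.
  - rewrite lam_ext_interior, Hx by lia; apply Rbar_min_l.
Qed.

Lemma lam_ext_succ_le_x_ext (lam x : nat -> R) :
  (forall i, (1 <= i <= n)%nat -> Finite (lam i) = Rbar_min (x_ext n x i) (x_ext n x (i - 1))) ->
  forall j, (j <= n)%nat -> Rbar_le (lam_ext n lam (j + 1)) (x_ext n x j).
Proof.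
  intros Hx j Hj; destruct (Nat.eq_dec j n) as [-> | Hjn].
  - rewrite Nat.add_1_r, lam_ext_last, x_ext_last; apply Rbar_le_refl.
  - rewrite lam_ext_interior, Hx, Nat.add_sub by lia; apply Rbar_min_r.
Qed.

End Extensions.

Theorem lemma8p1 (n : nat) (lam : nat -> R) :
  (forall i : nat, (1 <= i <= n)%nat ->
     Rbar_le (Rbar_min (lam_ext n lam (i - 1)) (lam_ext n lam (i + 1)))
             (Finite (lam i)))
  <->
  (exists x : nat -> R,
     forall i : nat, (1 <= i <= n)%nat ->
       Finite (lam i) = Rbar_min (x_ext n x i) (x_ext n x (i - 1))).
Proof.
  split.
  - intros Hlam; exists (fun k => Rmax (lam k) (lam (k + 1)%nat)); intros i Hi.
    rewrite !x_ext_neighbour_max by lia.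
    replace (i - 1 + 1)%nat with i by lia.
    rewrite <- (lam_ext_interior n lam i Hi).
    symmetry; apply Rbar_min_max_median.
    rewrite (lam_ext_interior n lam i Hi); apply Hlam, Hi.
  - intros [x Hx] i Hi.
    rewrite (Hx i Hi), (Rbar_min_comm (x_ext n x i)).
    apply Rbar_min_le_compat.
    + apply (lam_ext_le_x_ext n lam x Hx); lia.
    + apply (lam_ext_succ_le_x_ext n lam x Hx); lia.
Qed.
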